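(* Let $G$ be a simple directed graph and $\sigma$ a set of its nodes such that $G|_\sigma$ is a clique missing exactly one edge $j\not\to i$. Then for legal $\varepsilon,\delta$, $I-W_\sigma$ has Perron–Frobenius eigenvalue $$\lambda_{\max}=\varepsilon+\tfrac12(1-\varepsilon)\Big(|\sigma|+\sqrt{|\sigma|^2+4(\delta+\varepsilon)/(1-\varepsilon)}\Big).$$
   Context: A clique is a set of nodes pairwise bidirectionally connected; ''missing exactly one edge'' means all ordered pairs of distinct nodes of $\sigma$ are edges except one. Legal parameters: $\delta>0$, $0<\varepsilon<\frac{\delta}{\delta+1}$. $W=W(G,\varepsilon,\delta)$ has $W_{ii}=0$, $W_{ij}=-1+\varepsilon$ if $j\to i$, $W_{ij}=-1-\delta$ if $i\neq j$, $j\not\to i$; $W_\sigma$ is the principal submatrix on $\sigma$. $I-W_\sigma$ has positive entries and $\lambda_{\max}$ is its Perron–Frobenius eigenvalue. *)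

From HB Require Import structures.
From mathcomp Require Import all_boot all_order all_algebra.
From mathcomp Require Import complex.
Set Implicit Arguments. Unset Strict Implicit. Unset Printing Implicit Defensive.
Import Order.TTheory GRing.Theory Num.Theory.
Local Open Scope ring_scope.

(* A simple directed graph on a finite vertex type T: an edge relation
   [E : rel T] ([E j i] means j -> i) with no loops.  A relation allows at
   most one edge per ordered pair, so there are no multi-edges. *)
Definition simple_digraph (T : finType) (E : rel T) : Prop :=
  forall v : T, ~~ E v v.

Definition clique_missing_one_edge (T : finType) (E : rel T) (sigma : {set T})
  (i j : T) : Prop :=
  [/\ i \in sigma, j \in sigma, i != j &
      forall x y : T, x \in sigma -> y \in sigma -> x != y ->
        (E x y <-> ~ (x = j /\ y = i))].

Definition legal (R : realFieldType) (eps delta : R) : Prop :=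
  0 < delta /\ 0 < eps /\ eps < delta / (delta + 1).

Definition Wentry (R : pzRingType) (T : finType) (E : rel T) (eps delta : R)
  (i j : T) : R :=
  if i == j then 0 else if E j i then -1 + eps else -1 - delta.

Definition W_sub (R : pzRingType) (T : finType) (E : rel T) (eps delta : R)
  (sigma : {set T}) : 'M[R]_#|sigma| :=
  \matrix_(a, b) Wentry E eps delta (enum_val a) (enum_val b).

(* Perron–Frobenius eigenvalue (= spectral radius, attained by a real
   eigenvalue): l is a real eigenvalue of A and every complex eigenvalue z
   of A satisfies |z| <= l. *)
Definition PF_eigenvalue (R : rcfType) (n : nat) (A : 'M[R]_n) (l : R) : Prop :=
  root (char_poly A) l /\
  forall z : R[i], root (map_poly (real_complex R) (char_poly A)) z ->
    `|z| <= (real_complex R l).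

From mathcomp Require Import all_boot all_order all_algebra.
From mathcomp Require Import complex ring.
Set Implicit Arguments. Unset Strict Implicit. Unset Printing Implicit Defensive.
Import Order.TTheory GRing.Theory Num.Theory.
Local Open Scope ring_scope.
Local Open Scope complex_scope.

(* With k, l the positions of i, j in sigma, I - W_sigma is
   eps I + (1 - eps) J + (delta + eps) E_kl, a scalar plus an all-constant
   plus a single off-diagonal entry.  If v is a left eigenvector for eps + w
   with w != 0, then w v = (1 - eps) (sum v) 1 + (delta + eps) v_k e_l; reading
   off entry k and summing all entries gives
   w^2 = (1 - eps) n w + (1 - eps) (delta + eps).  So every complex eigenvalue
   is eps or eps + r with r a root of this real quadratic, whose roots satisfy
   |r_-| <= r_+; and eps + r_+ is attained, by the eigenvector
   (r_+ + (delta + eps) [b = l])_b. *)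

Definition scalar_const_delta_mx (R : pzRingType) n (e t c : R) (k l : 'I_n)
  : 'M[R]_n := e%:M + const_mx t + c *: delta_mx k l.

Lemma map_scalar_const_delta_mx (aR rR : pzRingType) (f : {rmorphism aR -> rR})
    n (e t c : aR) (k l : 'I_n) :
  map_mx f (scalar_const_delta_mx e t c k l)
  = scalar_const_delta_mx (f e) (f t) (f c) k l.
Proof. by rewrite !map_mxD map_scalar_mx map_const_mx map_mxZ map_delta_mx. Qed.

Section ScalarConstDelta.
Variables (F : fieldType) (n : nat) (e t c : F) (k l : 'I_n).
Hypothesis neq_kl : k != l.
Local Notation M := (scalar_const_delta_mx e t c k l).

Lemma mulmx_scalar_const_delta (v : 'rV[F]_n) b :
  (v *m M) 0 b = e * v 0 b + t * \sum_a v 0 a + c * v 0 k * (b == l)%:R.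
Proof.
rewrite !mulmxDr mul_mx_scalar -scalemxAr !mxE; congr (_ + _ + _).
- by rewrite mulr_sumr; apply: eq_bigr => a _; rewrite mxE mulrC.
- rewrite -mulrA (bigD1 k) //= big1 => [|a nak]; last by rewrite mxE (negbTE nak) mulr0.
  by rewrite mxE eqxx addr0.
Qed.

Lemma eigenvalue_scalar_const_delta (w : F) :
  w != 0 -> w ^+ 2 = t * n%:R * w + t * c -> eigenvalue M (e + w).
Proof.
move=> nz_w root_w; apply/eigenvalueP.
exists (\row_b (w + c * (b == l)%:R)); last first.
  by apply/eqP => /rowP /(_ k); rewrite !mxE (negbTE neq_kl) mulr0 addr0; exact/eqP.
have sum_v : \sum_a (\row_b (w + c * (b == l)%:R)) 0 a = n%:R * w + c.
  under eq_bigr do rewrite mxE.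
  rewrite big_split /= sumr_const card_ord mulr_natl.
  by rewrite (bigD1 l) //= big1 => [|a /negbTE ->]; rewrite ?mulr0 // eqxx mulr1 addr0.
apply/rowP => b; rewrite mulmx_scalar_const_delta sum_v !mxE (negbTE neq_kl) mulr0 addr0.
apply/eqP; rewrite -subr_eq0.
have -> : e * (w + c * (b == l)%:R) + t * (n%:R * w + c) + c * w * (b == l)%:R
          - (e + w) * (w + c * (b == l)%:R) = t * n%:R * w + t * c - w ^+ 2 by ring.
by rewrite root_w subrr.
Qed.

Lemma scalar_const_delta_eigenvalue (z : F) :
  eigenvalue M z -> z = e \/ (z - e) ^+ 2 = t * n%:R * (z - e) + t * c.
Proof.
case/eigenvalueP => v Mv nz_v.
set w := z - e; set s := \sum_a v 0 a.
have wv b : w * v 0 b = t * s + c * v 0 k * (b == l)%:R.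
  apply: (addrI (e * v 0 b)); rewrite -mulrDl addrC subrK addrA.
  by move/rowP/(_ b): Mv; rewrite mulmx_scalar_const_delta mxE.
have wvk : w * v 0 k = t * s by rewrite wv (negbTE neq_kl) mulr0 addr0.
have ws : w * s = t * n%:R * s + c * v 0 k.
  rewrite /s mulr_sumr (eq_bigr _ (fun b _ => wv b)) big_split /= sumr_const card_ord.
  rewrite (bigD1 l) //= big1 => [|b /negbTE ->]; last by rewrite mulr0.
  by rewrite eqxx mulr1 addr0 -/s -[_ *+ n]mulr_natr mulrAC.
have [/eqP|nz_w] := eqVneq w 0; first by rewrite subr_eq0 => /eqP; left.
have nz_s : s != 0.
  apply: contra_neq nz_v => s0; apply/rowP => b; rewrite mxE.
  have vk0 : v 0 k = 0.
    by apply/eqP; move/eqP: wvk; rewrite s0 mulr0 mulf_eq0 (negbTE nz_w).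
  by apply/eqP; move/eqP: (wv b); rewrite s0 vk0 !mulr0 mul0r addr0 mulf_eq0 (negbTE nz_w).
right; apply: (mulIf nz_s).
rewrite expr2 -[w * w * s]mulrA ws mulrDr [w * (c * _)]mulrCA wvk; ring.
Qed.

End ScalarConstDelta.

Lemma sqr_eq_sum_prod (R : idomainType) (x r1 r2 : R) :
  x ^+ 2 = (r1 + r2) * x - r1 * r2 -> x = r1 \/ x = r2.
Proof.
move=> hx; have : (x - r1) * (x - r2) = x ^+ 2 - ((r1 + r2) * x - r1 * r2) by ring.
rewrite -hx subrr.
by move/eqP; rewrite mulf_eq0 !subr_eq0 => /orP[]/eqP; [left|right].
Qed.

Section QuadraticRoots.
Variables (R : realFieldType) (th c N D : R).
Hypotheses (th_gt0 : 0 < th) (c_gt0 : 0 < c) (N_ge0 : 0 <= N) (D_ge0 : 0 <= D).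
Hypothesis sqrD : D ^+ 2 = N ^+ 2 + 4 * c / th.
Local Notation r_plus := (th / 2 * (N + D)).
Local Notation r_minus := (th / 2 * (N - D)).

Lemma lt_N_discr_root : N < D.
Proof.
rewrite -(@ltr_pXn2r _ 2) ?nnegrE // sqrD.
by rewrite ltrDl divr_gt0 ?mulr_gt0.
Qed.

Lemma quadratic_roots_sum : r_plus + r_minus = th * N.
Proof. by field. Qed.

Lemma quadratic_roots_prod : r_plus * r_minus = - (th * c).
Proof.
have -> : r_plus * r_minus = th ^+ 2 / 4 * (N ^+ 2 - D ^+ 2) by field.
by rewrite sqrD; field; rewrite gt_eqF.
Qed.

Lemma quadratic_root_plus_eq : r_plus ^+ 2 = th * N * r_plus + th * c.
Proof.
have -> : r_plus ^+ 2 = (r_plus + r_minus) * r_plus - r_plus * r_minus by ring.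
by rewrite quadratic_roots_sum quadratic_roots_prod opprK.
Qed.

Lemma quadratic_root_plus_gt0 : 0 < r_plus.
Proof. by rewrite mulr_gt0 ?divr_gt0 // ltr_wpDl // (le_lt_trans N_ge0 lt_N_discr_root). Qed.

Lemma norm_quadratic_root_minus : `|r_minus| <= r_plus.
Proof.
rewrite ler0_norm; last by rewrite mulr_ge0_le0 ?divr_ge0 ?ltW // subr_lt0 lt_N_discr_root.
rewrite -mulrN ler_wpM2l ?divr_ge0 ?(ltW th_gt0) // opprB [N + D]addrC lerD2l.
by rewrite (@le_trans _ _ 0) // oppr_le0.
Qed.

End QuadraticRoots.

Lemma W_sub_clique_missing_one_edge (R : comPzRingType) (T : finType) (E : rel T)
    (sigma : {set T}) (i j : T) (eps delta : R) :
  clique_missing_one_edge E sigma i j ->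
  exists k l : 'I_#|sigma|, k != l /\
    1%:M - W_sub E eps delta sigma
    = scalar_const_delta_mx eps (1 - eps) (delta + eps) k l.
Proof.
case=> sigma_i sigma_j neq_ij E_sigma.
pose k := enum_rank_in sigma_i i; pose l := enum_rank_in sigma_j j.
have val_k : enum_val k = i := enum_rankK_in sigma_i sigma_i.
have val_l : enum_val l = j := enum_rankK_in sigma_j sigma_j.
have neq_kl : k != l by apply: contra_neq neq_ij => ekl; rewrite -val_k -val_l ekl.
have E_val a b : a != b -> E (enum_val b) (enum_val a) = ~~ ((a == k) && (b == l)).
  move=> nab; have nv : enum_val b != enum_val a by rewrite (inj_eq enum_val_inj) eq_sym.
  have E_ba := E_sigma _ _ (enum_valP b) (enum_valP a) nv.
  apply/idP/idP => [/E_ba miss|nkl].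
    by apply/negP => /andP[/eqP ak /eqP bl]; apply: miss; rewrite ak bl val_k val_l.
  apply/E_ba => -[bj ai]; move: nkl.
  by rewrite -val_k -val_l in ai bj; rewrite (enum_val_inj ai) (enum_val_inj bj) !eqxx.
exists k, l; split => //; apply/matrixP => a b; rewrite !mxE /Wentry (inj_eq enum_val_inj).
have [<-|nab] := eqVneq a b.
  have -> : (a == k) && (a == l) = false.
    by apply/negbTE; apply: contra neq_kl => /andP[/eqP <- /eqP <-].
  by rewrite /= subr0 mulr0 addr0 addrC subrK.
by rewrite E_val //; case: (_ && _) => /=; ring.
Qed.

Lemma normC_real_le (R : rcfType) (x y : R) : `|x| <= y -> `|x%:C| <= y%:C.
Proof. by rewrite normc_def /= expr0n /= addr0 sqrtr_sqr lecR. Qed.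

Lemma norm_shifted_quadratic_root (R : rcfType) (th c D eps : R) (n : nat) (x : R[i]) :
  0 < th -> 0 < c -> 0 <= D -> D ^+ 2 = n%:R ^+ 2 + 4 * c / th -> 0 < eps ->
  x ^+ 2 = th%:C * n%:R * x + th%:C * c%:C ->
  `|eps%:C + x| <= (eps + th / 2 * (n%:R + D))%:C.
Proof.
move=> th_gt0 c_gt0 D_ge0 sqrD eps_gt0 root_x.
have rp_gt0 := quadratic_root_plus_gt0 th_gt0 c_gt0 (ler0n _ _) D_ge0 sqrD.
have [] := @sqr_eq_sum_prod _ x (th / 2 * (n%:R + D))%:C (th / 2 * (n%:R - D))%:C.
  rewrite root_x -rmorphD quadratic_roots_sum -[X in _ - X]rmorphM.
  by rewrite (quadratic_roots_prod th_gt0 sqrD) rmorphN opprK !rmorphM rmorph_nat.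
all: move=> ->; rewrite -rmorphD; apply: normC_real_le.
  by rewrite ger0_norm // ltW // addr_gt0.
rewrite (le_trans (ler_normD _ _)) // gtr0_norm // lerD2l.
exact: norm_quadratic_root_minus th_gt0 c_gt0 (ler0n _ _) D_ge0 sqrD.
Qed.

Theorem corollary3 (R : rcfType) (T : finType) (E : rel T) (sigma : {set T})
  (i j : T) (eps delta : R) :
  simple_digraph E ->
  clique_missing_one_edge E sigma i j ->
  legal eps delta ->
  PF_eigenvalue (1%:M - W_sub E eps delta sigma)
    (eps + (1 - eps) / 2 *
       (#|sigma|%:R + Num.sqrt (#|sigma|%:R ^+ 2 + 4 * (delta + eps) / (1 - eps)))).
Proof.
move=> _ /(W_sub_clique_missing_one_edge eps delta) [k [l [neq_kl ->]]].
case=> delta_gt0 [eps_gt0 eps_lt].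
set th := 1 - eps; set c := delta + eps.
have th_gt0 : 0 < th.
  have : delta / (delta + 1) < 1 by rewrite ltr_pdivrMr ?mul1r ?ltrDl ?addr_gt0.
  by rewrite subr_gt0; apply: lt_trans.
have c_gt0 : 0 < c by rewrite addr_gt0.
set D := Num.sqrt _.
have D_ge0 : 0 <= D := sqrtr_ge0 _.
have sqrD : D ^+ 2 = #|sigma|%:R ^+ 2 + 4 * c / th.
  by rewrite sqr_sqrtr // addr_ge0 ?sqr_ge0 // divr_ge0 ?mulr_ge0 ?ltW.
have rp_gt0 := quadratic_root_plus_gt0 th_gt0 c_gt0 (ler0n _ _) D_ge0 sqrD.
split.
  rewrite -eigenvalue_root_char eigenvalue_scalar_const_delta ?lt0r_neq0 //.
  exact: quadratic_root_plus_eq.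
move=> z; rewrite map_char_poly -eigenvalue_root_char map_scalar_const_delta_mx.
case/(scalar_const_delta_eigenvalue neq_kl) => [->|root_z].
  by apply: normC_real_le; rewrite ger0_norm ?lerDl ?ltW ?addr_gt0.
rewrite -[z](subrK eps%:C) addrC.
exact: norm_shifted_quadratic_root root_z.
Qed.
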